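(* Let $M(C,\bar\xi,\pi)$ be a Myller configuration with Darboux frame $(\bar\xi,\bar\mu,\bar v)$ and invariants $G,K,T$, $(K,T)\neq(0,0)$ everywhere, and suppose $C$ is a $W_o$-helix with fixed unit axis $\bar l_o$ and constant angle $\varepsilon$, $\langle\bar W_o,\bar l_o\rangle=\cos\varepsilon$. Then, for one choice of sign, $$\bar l_o=\cos\varepsilon\frac{T}{\sqrt{T^2+K^2}}\bar\xi-\cos\varepsilon\frac{K}{\sqrt{T^2+K^2}}\bar\mu\mp(\sin\varepsilon)\bar v.$$
   Context: Let $C$ be a smooth curve in $E^3$ parametrized by arclength $s$; primes denote $d/ds$. A Myller configuration $M(C,\bar\xi,\pi)$ consists of a smooth unit vector field $\bar\xi$ along $C$ and a smooth oriented plane field $\pi$ with $\bar\xi\in\pi$; $\bar v$ is the unit normal of $\pi$, $\bar\mu=\bar v\times\bar\xi$, and $\bar\xi'=G\bar\mu+K\bar v$, $\bar\mu'=-G\bar\xi+T\bar v$, $\bar v'=-K\bar\xi-T\bar\mu$. The OD-vector is $W_o=T\bar\xi-K\bar\mu$, $\bar W_o=W_o/\|W_o\|$; $C$ is a $W_o$-helix if there are a constant unit vector $\bar l_o$ (axis) and constant $\varepsilon$ with $\langle\bar W_o,\bar l_o\rangle=\cos\varepsilon$ along $C$.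
   Formalization: The unit OD-vector W̄_o is also assumed constant on no open subinterval of the arclength interval, and the sign in ∓ is a single sign, the same for every s along C. Apart from conventions, each condition added here is assumed in the paper as well or is needed for the statement above to hold. *)

From Stdlib Require Import Reals.
From Coquelicot Require Import Coquelicot.
Open Scope R_scope.

Definition vec := (R * R * R)%type.
Definition vx (u : vec) : R := fst (fst u).
Definition vy (u : vec) : R := snd (fst u).
Definition vz (u : vec) : R := snd u.
Definition mkv (x y z : R) : vec := (x, y, z).

Definition vadd (u w : vec) : vec := mkv (vx u + vx w) (vy u + vy w) (vz u + vz w).
Definition vscal (c : R) (u : vec) : vec := mkv (c * vx u) (c * vy u) (c * vz u).
Definition dot (u w : vec) : R := vx u * vx w + vy u * vy w + vz u * vz w.
Definition cross (u w : vec) : vec :=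
  mkv (vy u * vz w - vz u * vy w) (vz u * vx w - vx u * vz w) (vx u * vy w - vy u * vx w).
Definition vnorm (u : vec) : R := sqrt (dot u u).

Definition vis_derive (F : R -> vec) (s : R) (D : vec) : Prop :=
  is_derive (fun t => vx (F t)) s (vx D) /\
  is_derive (fun t => vy (F t)) s (vy D) /\
  is_derive (fun t => vz (F t)) s (vz D).

Definition smooth_on (f : R -> R) (a b : R) : Prop :=
  forall (n : nat) (s : R), a < s < b -> ex_derive_n f n s.
Definition vsmooth_on (F : R -> vec) (a b : R) : Prop :=
  smooth_on (fun t => vx (F t)) a b /\ smooth_on (fun t => vy (F t)) a b /\
  smooth_on (fun t => vz (F t)) a b.

Definition myller_config (a b : R) (r xi mu v : R -> vec) (G K T : R -> R) : Prop :=
  a < b /\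
  vsmooth_on r a b /\ vsmooth_on xi a b /\ vsmooth_on v a b /\
  forall s, a < s < b ->
    (exists r', vis_derive r s r' /\ vnorm r' = 1) /\
    vnorm (xi s) = 1 /\ vnorm (v s) = 1 /\ dot (xi s) (v s) = 0 /\
    mu s = cross (v s) (xi s) /\
    vis_derive xi s (vadd (vscal (G s) (mu s)) (vscal (K s) (v s))) /\
    vis_derive mu s (vadd (vscal (- G s) (xi s)) (vscal (T s) (v s))) /\
    vis_derive v s (vadd (vscal (- K s) (xi s)) (vscal (- T s) (mu s))).

Definition Wo (xi mu : R -> vec) (K T : R -> R) (s : R) : vec :=
  vadd (vscal (T s) (xi s)) (vscal (- K s) (mu s)).
Definition Wo_bar (xi mu : R -> vec) (K T : R -> R) (s : R) : vec :=
  vscal (/ vnorm (Wo xi mu K T s)) (Wo xi mu K T s).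

Definition Wo_helix (a b : R) (xi mu : R -> vec) (K T : R -> R) (l : vec) (eps : R) : Prop :=
  vnorm l = 1 /\
  forall s, a < s < b -> dot (Wo_bar xi mu K T s) l = cos eps.

Definition Wo_bar_nowhere_locally_constant (a b : R) (xi mu : R -> vec) (K T : R -> R) : Prop :=
  forall a' b', a <= a' -> a' < b' -> b' <= b ->
    exists s1 s2, a' < s1 < b' /\ a' < s2 < b' /\
      Wo_bar xi mu K T s1 <> Wo_bar xi mu K T s2.

From Stdlib Require Import Reals Lra Psatz.
From Coquelicot Require Import Coquelicot.
Open Scope R_scope.

(* Write [Wo_bar = P xi + Q mu] with [P = T/n], [Q = -K/n], [n = sqrt (T^2 + K^2)], and let
   [A, B, C] be the components of [l] along [xi, mu, v].  Since [P^2 + Q^2 = 1] and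
   [P K + Q T = 0], the Darboux equations give [Wo_bar' = (w + G) (P mu - Q xi)], where [w] is
   the angular speed of [(P, Q)].  Differentiating the helix condition [P A + Q B = cos eps]
   yields [(w + G) (P B - Q A) = 0].  If [P B - Q A] were nonzero somewhere, [w + G] would vanish
   on a neighbourhood and [Wo_bar] would be constant there, which non-degeneracy excludes.
   Hence [P B - Q A = 0], so [A = cos eps P] and [B = cos eps Q]; then [C' = -(K A + T B) = 0]
   and [|l| = 1] forces the constant [C] to be [-/+ sin eps]. *)

Ltac unfold_vec := unfold dot, vadd, vscal, cross, mkv, vx, vy, vz; simpl.

Lemma vec_ext (u w : vec) : vx u = vx w -> vy u = vy w -> vz u = vz w -> u = w.
Proof.
  destruct u as [[u1 u2] u3], w as [[w1 w2] w3]; unfold vx, vy, vz; simpl.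
  intros -> -> ->; reflexivity.
Qed.

Lemma vec_ext_dot (u w : vec) : (forall e, dot u e = dot w e) -> u = w.
Proof.
  intros H. pose proof (H (mkv 1 0 0)) as H1. pose proof (H (mkv 0 1 0)) as H2.
  pose proof (H (mkv 0 0 1)) as H3. unfold dot, mkv, vx, vy, vz in *; simpl in *.
  apply vec_ext; unfold vx, vy, vz; lra.
Qed.

Lemma dot_comm (u w : vec) : dot u w = dot w u.
Proof. unfold dot; ring. Qed.

Lemma dot_vadd_l (u w z : vec) : dot (vadd u w) z = dot u z + dot w z.
Proof. unfold_vec; ring. Qed.

Lemma dot_vscal_l (c : R) (u z : vec) : dot (vscal c u) z = c * dot u z.
Proof. unfold_vec; ring. Qed.

Lemma dot_vadd_r (u w z : vec) : dot z (vadd u w) = dot z u + dot z w.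
Proof. unfold_vec; ring. Qed.

Lemma dot_vscal_r (c : R) (u z : vec) : dot z (vscal c u) = c * dot z u.
Proof. unfold_vec; ring. Qed.

Lemma dot_self_ge0 (u : vec) : 0 <= dot u u.
Proof. unfold dot; nra. Qed.

Lemma vnorm_eq1 (u : vec) : vnorm u = 1 -> dot u u = 1.
Proof.
  unfold vnorm; intros H.
  rewrite <- (sqrt_sqrt (dot u u)) by apply dot_self_ge0. rewrite H; ring.
Qed.

Lemma dot_cross_cross (w x : vec) :
  dot (cross w x) (cross w x) = dot w w * dot x x - dot w x ^ 2.
Proof. destruct w as [[w1 w2] w3], x as [[x1 x2] x3]; unfold_vec; ring. Qed.

Lemma dot_cross_l (w x : vec) : dot (cross w x) w = 0.
Proof. destruct w as [[w1 w2] w3], x as [[x1 x2] x3]; unfold_vec; ring. Qed.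

Lemma dot_cross_r (w x : vec) : dot (cross w x) x = 0.
Proof. destruct w as [[w1 w2] w3], x as [[x1 x2] x3]; unfold_vec; ring. Qed.

Lemma cross_decomposition (w x u : vec) :
  vscal (dot w w * dot x x - dot w x ^ 2) u =
  vadd (vadd (vscal (dot x u * dot w w - dot w u * dot w x) x)
             (vscal (dot (cross w x) u) (cross w x)))
       (vscal (dot w u * dot x x - dot x u * dot w x) w).
Proof.
  destruct w as [[w1 w2] w3], x as [[x1 x2] x3], u as [[u1 u2] u3].
  apply vec_ext; unfold_vec; ring.
Qed.

Lemma orthonormal_expansion (w x u : vec) :
  dot w w = 1 -> dot x x = 1 -> dot w x = 0 ->
  u = vadd (vadd (vscal (dot x u) x) (vscal (dot (cross w x) u) (cross w x)))
           (vscal (dot w u) w).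
Proof.
  intros Hw Hx Hwx. pose proof (cross_decomposition w x u) as E.
  rewrite Hw, Hx, Hwx in E.
  apply vec_ext; [apply (f_equal vx) in E | apply (f_equal vy) in E | apply (f_equal vz) in E];
    unfold vadd, vscal, mkv, vx, vy, vz in *; simpl in *; lra.
Qed.

(* [apply] cannot match the generic [plus] and [zero] of Coquelicot's [is_derive_plus] and
   [is_derive_const] against [Rplus] and [0]; these restatements over [R] can be applied. *)
Lemma is_derive_Rplus (f g : R -> R) (x df dg : R) :
  is_derive f x df -> is_derive g x dg -> is_derive (fun t => f t + g t) x (df + dg).
Proof. exact (is_derive_plus f g x df dg). Qed.

Lemma is_derive_Rconst (c x : R) : is_derive (fun _ => c) x 0.
Proof. exact (is_derive_const c x). Qed.

Lemma is_derive_dot (F H : R -> vec) (s : R) (D E : vec) :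
  vis_derive F s D -> vis_derive H s E ->
  is_derive (fun t => dot (F t) (H t)) s (dot D (H s) + dot (F s) E).
Proof.
  intros [F1 [F2 F3]] [H1 [H2 H3]].
  replace (dot D (H s) + dot (F s) E) with
    ((vx D * vx (H s) + vx (F s) * vx E) + (vy D * vy (H s) + vy (F s) * vy E)
     + (vz D * vz (H s) + vz (F s) * vz E)) by (unfold dot; ring).
  unfold dot.
  apply is_derive_Rplus; [apply is_derive_Rplus|]; apply Derive.is_derive_mult; assumption.
Qed.

Lemma is_derive_dot_const (F : R -> vec) (l : vec) (s : R) (D : vec) :
  vis_derive F s D -> is_derive (fun t => dot (F t) l) s (dot D l).
Proof.
  intros HF.
  replace (dot D l) with (dot D l + dot (F s) (mkv 0 0 0))
    by (unfold dot, mkv, vx, vy, vz; simpl; ring).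
  apply is_derive_dot; [exact HF|]. split; [|split]; apply is_derive_Rconst.
Qed.

Lemma interval_locally (a b s : R) (p : R -> Prop) :
  a < s < b -> (forall t, a < t < b -> p t) -> locally s p.
Proof. intros Hs H. exact (filter_imp _ _ H (open_and _ _ (open_gt a) (open_lt b) s Hs)). Qed.

Lemma locally_closed_interval (p : R -> Prop) (s : R) :
  locally s p -> exists a' b', a' < s < b' /\ forall y, a' <= y <= b' -> p y.
Proof.
  intros [e He]. pose proof (cond_pos e).
  exists (s - e / 2), (s + e / 2). split; [lra|].
  intros y Hy. apply He. change (Rabs (y - s) < e). apply Rabs_def1; lra.
Qed.

Lemma derive_zero_eq (g : R -> R) (x1 x2 : R) :
  (forall y, Rmin x1 x2 <= y <= Rmax x1 x2 -> is_derive g y 0) -> g x1 = g x2.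
Proof.
  intros H.
  destruct (MVT_gen g x1 x2 (fun _ => 0)) as [c [_ E]].
  - intros y Hy. apply H. lra.
  - intros y Hy. apply continuity_pt_filterlim.
    apply (ex_derive_continuous (K := R_AbsRing) (V := R_NormedModule)).
    exists 0. apply H, Hy.
  - lra.
Qed.

Lemma smooth_derivative_ex_derive (f d : R -> R) (a b s : R) :
  smooth_on f a b -> (forall t, a < t < b -> is_derive f t (d t)) -> a < s < b ->
  ex_derive d s.
Proof.
  intros Sf Hd Hs.
  apply (ex_derive_ext_loc (Derive f)); [|exact (Sf 2%nat s Hs)].
  apply (interval_locally a b s); [exact Hs|].
  intros t Ht. exact (is_derive_unique _ _ _ (Hd t Ht)).
Qed.

Lemma vsmooth_derivative_ex_derive (F D : R -> vec) (a b s : R) :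
  vsmooth_on F a b -> (forall t, a < t < b -> vis_derive F t (D t)) -> a < s < b ->
  exists D', vis_derive D s D'.
Proof.
  intros [Sx [Sy Sz]] HD Hs.
  destruct (smooth_derivative_ex_derive _ (fun t => vx (D t)) a b s Sx) as [dx Hx];
    [intros t Ht; apply (HD t Ht) | exact Hs |].
  destruct (smooth_derivative_ex_derive _ (fun t => vy (D t)) a b s Sy) as [dy Hy];
    [intros t Ht; apply (HD t Ht) | exact Hs |].
  destruct (smooth_derivative_ex_derive _ (fun t => vz (D t)) a b s Sz) as [dz Hz];
    [intros t Ht; apply (HD t Ht) | exact Hs |].
  exists (mkv dx dy dz). split; [|split]; assumption.
Qed.

Lemma unit_circle_derive (P Q : R -> R) (s dP dQ : R) :
  is_derive P s dP -> is_derive Q s dQ -> locally s (fun t => P t ^ 2 + Q t ^ 2 = 1) ->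
  dP = - (P s * dQ - Q s * dP) * Q s /\ dQ = (P s * dQ - Q s * dP) * P s.
Proof.
  intros HP HQ H1.
  assert (D1 : is_derive (fun t => P t * P t + Q t * Q t) s
                 (dP * P s + P s * dP + (dQ * Q s + Q s * dQ)))
    by (apply is_derive_Rplus; apply Derive.is_derive_mult; assumption).
  assert (D0 : is_derive (fun t => P t * P t + Q t * Q t) s 0).
  { apply (is_derive_ext_loc (fun _ => 1)); [|apply is_derive_Rconst].
    eapply filter_imp; [|exact H1]. intros t Ht. cbv beta in Ht.
    change (1 = P t * P t + Q t * Q t :> R). rewrite <- Ht. ring. }
  assert (Horth : P s * dP + Q s * dQ = 0).
  { pose proof (eq_trans (eq_sym (is_derive_unique _ _ _ D1)) (is_derive_unique _ _ _ D0)).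
    lra. }
  assert (Hs : P s ^ 2 + Q s ^ 2 = 1) by exact (locally_singleton _ _ H1).
  split.
  - transitivity (dP * (P s ^ 2 + Q s ^ 2) - P s * (P s * dP + Q s * dQ)); [|ring].
    rewrite Hs, Horth. ring.
  - transitivity (dQ * (P s ^ 2 + Q s ^ 2) - Q s * (P s * dP + Q s * dQ)); [|ring].
    rewrite Hs, Horth. ring.
Qed.

Lemma sum_sq_pos (x y : R) : (x, y) <> (0, 0) -> 0 < y ^ 2 + x ^ 2.
Proof.
  intros H. destruct (Req_dec x 0) as [->|Hx]; [|nra].
  destruct (Req_dec y 0) as [->|Hy]; [contradiction|nra].
Qed.

Lemma sq_eq_sign (c x : R) : c ^ 2 = x ^ 2 -> exists sg, (sg = 1 \/ sg = -1) /\ c = - sg * x.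
Proof.
  intros H. assert (E : (c + x) * (c - x) = 0) by (rewrite <- (Rminus_diag_eq _ _ H); ring).
  destruct (Rmult_integral _ _ E); [exists 1 | exists (-1)]; split; lra.
Qed.

Definition Wo_bar_xi (K T : R -> R) (s : R) : R := T s / sqrt (T s ^ 2 + K s ^ 2).
Definition Wo_bar_mu (K T : R -> R) (s : R) : R := - (K s / sqrt (T s ^ 2 + K s ^ 2)).

(* [(Wo_bar_xi, Wo_bar_mu)] runs on the unit circle; this is its angular speed. *)
Definition Wo_bar_rate (K T : R -> R) (s : R) : R :=
  Wo_bar_xi K T s * Derive (Wo_bar_mu K T) s - Wo_bar_mu K T s * Derive (Wo_bar_xi K T) s.

Lemma Wo_bar_orth_KT (K T : R -> R) (s : R) :
  Wo_bar_xi K T s * K s + Wo_bar_mu K T s * T s = 0.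
Proof. unfold Wo_bar_xi, Wo_bar_mu, Rdiv; ring. Qed.

Section MyllerConfiguration.

Variables (a b : R) (r xi mu v : R -> vec) (G K T : R -> R).
Hypothesis config : myller_config a b r xi mu v G K T.

Lemma frame_orthonormal (s : R) : a < s < b ->
  dot (xi s) (xi s) = 1 /\ dot (v s) (v s) = 1 /\ dot (xi s) (v s) = 0 /\
  dot (mu s) (mu s) = 1 /\ dot (mu s) (xi s) = 0 /\ dot (mu s) (v s) = 0.
Proof.
  intros Hs. destruct config as [_ [_ [_ [_ Hpt]]]].
  destruct (Hpt s Hs) as [_ [Hxi [Hv [Hxv [Hmu _]]]]].
  apply vnorm_eq1 in Hxi, Hv.
  rewrite Hmu, dot_cross_cross, dot_cross_l, dot_cross_r, (dot_comm (v s) (xi s)), Hxi, Hv, Hxv.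
  repeat split; ring.
Qed.

Lemma frame_expansion (u : vec) (s : R) : a < s < b ->
  u = vadd (vadd (vscal (dot (xi s) u) (xi s)) (vscal (dot (mu s) u) (mu s)))
           (vscal (dot (v s) u) (v s)).
Proof.
  intros Hs. destruct (frame_orthonormal s Hs) as [Hxi [Hv [Hxv _]]].
  destruct config as [_ [_ [_ [_ Hpt]]]]. destruct (Hpt s Hs) as [_ [_ [_ [_ [Hmu _]]]]].
  rewrite Hmu. apply orthonormal_expansion; [exact Hv | exact Hxi | rewrite dot_comm; exact Hxv].
Qed.

Lemma Darboux_equations (s : R) : a < s < b ->
  vis_derive xi s (vadd (vscal (G s) (mu s)) (vscal (K s) (v s))) /\
  vis_derive mu s (vadd (vscal (- G s) (xi s)) (vscal (T s) (v s))) /\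
  vis_derive v s (vadd (vscal (- K s) (xi s)) (vscal (- T s) (mu s))).
Proof.
  intros Hs. destruct config as [_ [_ [_ [_ Hpt]]]].
  destruct (Hpt s Hs) as [_ [_ [_ [_ [_ H]]]]]. exact H.
Qed.

Lemma is_derive_xi_dot (e : vec) (s : R) : a < s < b ->
  is_derive (fun t => dot (xi t) e) s (G s * dot (mu s) e + K s * dot (v s) e).
Proof.
  intros Hs. rewrite <- !dot_vscal_l, <- dot_vadd_l.
  apply is_derive_dot_const, (Darboux_equations s Hs).
Qed.

Lemma is_derive_mu_dot (e : vec) (s : R) : a < s < b ->
  is_derive (fun t => dot (mu t) e) s (- G s * dot (xi s) e + T s * dot (v s) e).
Proof.
  intros Hs. rewrite <- !dot_vscal_l, <- dot_vadd_l.
  apply is_derive_dot_const, (Darboux_equations s Hs).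
Qed.

Lemma is_derive_v_dot (e : vec) (s : R) : a < s < b ->
  is_derive (fun t => dot (v t) e) s (- K s * dot (xi s) e + - T s * dot (mu s) e).
Proof.
  intros Hs. rewrite <- !dot_vscal_l, <- dot_vadd_l.
  apply is_derive_dot_const, (Darboux_equations s Hs).
Qed.

Lemma ex_derive_K (s : R) : a < s < b -> ex_derive K s.
Proof.
  intros Hs. destruct config as [_ [_ [Sxi _]]].
  set (D := fun t => vadd (vscal (G t) (mu t)) (vscal (K t) (v t))).
  destruct (vsmooth_derivative_ex_derive xi D a b s Sxi) as [D' HD'];
    [intros t Ht; apply (Darboux_equations t Ht) | exact Hs |].
  assert (HK : forall t, a < t < b -> dot (D t) (v t) = K t).
  { intros t Ht. destruct (frame_orthonormal t Ht) as [_ [Hv [_ [_ [_ Hmv]]]]].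
    unfold D. rewrite dot_vadd_l, !dot_vscal_l, Hmv, Hv. ring. }
  eexists. apply (is_derive_ext_loc (fun t => dot (D t) (v t))).
  - exact (interval_locally a b s _ Hs HK).
  - apply is_derive_dot; [exact HD' | apply (Darboux_equations s Hs)].
Qed.

Lemma ex_derive_T (s : R) : a < s < b -> ex_derive T s.
Proof.
  intros Hs. destruct config as [_ [_ [_ [Sv _]]]].
  set (D := fun t => vadd (vscal (- K t) (xi t)) (vscal (- T t) (mu t))).
  destruct (vsmooth_derivative_ex_derive v D a b s Sv) as [D' HD'];
    [intros t Ht; apply (Darboux_equations t Ht) | exact Hs |].
  assert (HT : forall t, a < t < b -> -1 * dot (D t) (mu t) = T t).
  { intros t Ht. destruct (frame_orthonormal t Ht) as [_ [_ [_ [Hmu [Hmx _]]]]].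
    unfold D. rewrite dot_vadd_l, !dot_vscal_l, dot_comm, Hmx, Hmu. ring. }
  eexists. apply (is_derive_ext_loc (fun t => -1 * dot (D t) (mu t))).
  - exact (interval_locally a b s _ Hs HT).
  - apply is_derive_scal, is_derive_dot; [exact HD' | apply (Darboux_equations s Hs)].
Qed.

Hypothesis KT_nonzero : forall s, a < s < b -> (K s, T s) <> (0, 0).

Local Notation P := (Wo_bar_xi K T).
Local Notation Q := (Wo_bar_mu K T).

Lemma Wo_bar_in_frame (s : R) : a < s < b ->
  Wo_bar xi mu K T s = vadd (vscal (P s) (xi s)) (vscal (Q s) (mu s)).
Proof.
  intros Hs. destruct (frame_orthonormal s Hs) as [Hxi [_ [_ [Hmu [Hmx _]]]]].
  assert (Hn : vnorm (Wo xi mu K T s) = sqrt (T s ^ 2 + K s ^ 2)).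
  { unfold vnorm, Wo. f_equal.
    rewrite !dot_vadd_l, !dot_vscal_l, !dot_vadd_r, !dot_vscal_r, Hxi, Hmu, Hmx,
      (dot_comm (xi s)), Hmx.
    ring. }
  unfold Wo_bar. rewrite Hn. unfold Wo, Wo_bar_xi, Wo_bar_mu, Rdiv.
  apply vec_ext; unfold vadd, vscal, mkv, vx, vy, vz; simpl; ring.
Qed.

Lemma Wo_bar_unit (s : R) : a < s < b -> P s ^ 2 + Q s ^ 2 = 1.
Proof.
  intros Hs. pose proof (sum_sq_pos _ _ (KT_nonzero s Hs)) as Hpos.
  unfold Wo_bar_xi, Wo_bar_mu. set (n := sqrt (T s ^ 2 + K s ^ 2)).
  assert (Hn2 : n ^ 2 = T s ^ 2 + K s ^ 2) by (apply pow2_sqrt; lra).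
  assert (Hn : n <> 0) by (apply Rgt_not_eq, sqrt_lt_R0, Hpos).
  transitivity ((T s ^ 2 + K s ^ 2) / n ^ 2); [field; exact Hn|].
  rewrite Hn2. field. lra.
Qed.

Lemma ex_derive_Wo_bar_xi (s : R) : a < s < b -> ex_derive P s.
Proof.
  intros Hs. pose proof (sum_sq_pos _ _ (KT_nonzero s Hs)).
  unfold Wo_bar_xi. auto_derive.
  repeat split;
    first [apply ex_derive_T, Hs | apply ex_derive_K, Hs | apply Rgt_not_eq, sqrt_lt_R0; nra | nra].
Qed.

Lemma ex_derive_Wo_bar_mu (s : R) : a < s < b -> ex_derive Q s.
Proof.
  intros Hs. pose proof (sum_sq_pos _ _ (KT_nonzero s Hs)).
  unfold Wo_bar_mu. auto_derive.
  repeat split;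
    first [apply ex_derive_T, Hs | apply ex_derive_K, Hs | apply Rgt_not_eq, sqrt_lt_R0; nra | nra].
Qed.

Lemma is_derive_Wo_bar_dot (e : vec) (s : R) : a < s < b ->
  is_derive (fun t => P t * dot (xi t) e + Q t * dot (mu t) e) s
    ((Wo_bar_rate K T s + G s) * (P s * dot (mu s) e - Q s * dot (xi s) e)).
Proof.
  intros Hs.
  pose proof (Derive_correct _ _ (ex_derive_Wo_bar_xi s Hs)) as HP.
  pose proof (Derive_correct _ _ (ex_derive_Wo_bar_mu s Hs)) as HQ.
  destruct (unit_circle_derive P Q s _ _ HP HQ) as [EP EQ];
    [exact (interval_locally a b s _ Hs Wo_bar_unit)|].
  fold (Wo_bar_rate K T s) in EP, EQ.
  replace ((Wo_bar_rate K T s + G s) * (P s * dot (mu s) e - Q s * dot (xi s) e)) with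
    (Derive P s * dot (xi s) e + P s * (G s * dot (mu s) e + K s * dot (v s) e)
     + (Derive Q s * dot (mu s) e + Q s * (- G s * dot (xi s) e + T s * dot (v s) e))).
  - apply is_derive_Rplus; apply Derive.is_derive_mult;
      [exact HP | apply is_derive_xi_dot, Hs | exact HQ | apply is_derive_mu_dot, Hs].
  - rewrite EP, EQ.
    transitivity ((Wo_bar_rate K T s + G s) * (P s * dot (mu s) e - Q s * dot (xi s) e)
                  + (P s * K s + Q s * T s) * dot (v s) e); [ring|].
    rewrite Wo_bar_orth_KT. ring.
Qed.

Lemma Wo_bar_const_between (s1 s2 : R) :
  (forall y, Rmin s1 s2 <= y <= Rmax s1 s2 -> a < y < b /\ Wo_bar_rate K T y + G y = 0) ->
  Wo_bar xi mu K T s1 = Wo_bar xi mu K T s2.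
Proof.
  intros H.
  assert (Hs1 : a < s1 < b) by (apply H; split; [apply Rmin_l | apply Rmax_l]).
  assert (Hs2 : a < s2 < b) by (apply H; split; [apply Rmin_r | apply Rmax_r]).
  rewrite (Wo_bar_in_frame s1 Hs1), (Wo_bar_in_frame s2 Hs2).
  apply vec_ext_dot. intros e. rewrite !dot_vadd_l, !dot_vscal_l.
  apply (derive_zero_eq (fun t => P t * dot (xi t) e + Q t * dot (mu t) e)).
  intros y Hy. destruct (H y Hy) as [Hy' Hrate].
  replace 0 with ((Wo_bar_rate K T y + G y) * (P y * dot (mu y) e - Q y * dot (xi y) e))
    by (rewrite Hrate; ring).
  apply is_derive_Wo_bar_dot, Hy'.
Qed.

Variables (l : vec) (eps : R).
Hypothesis helix : Wo_helix a b xi mu K T l eps.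
Hypothesis nondegenerate : Wo_bar_nowhere_locally_constant a b xi mu K T.

Lemma helix_cos (s : R) : a < s < b -> P s * dot (xi s) l + Q s * dot (mu s) l = cos eps.
Proof.
  intros Hs. destruct helix as [_ Hh].
  rewrite <- (Hh s Hs), (Wo_bar_in_frame s Hs), dot_vadd_l, !dot_vscal_l. reflexivity.
Qed.

Lemma helix_rate_normal (s : R) : a < s < b ->
  (Wo_bar_rate K T s + G s) * (P s * dot (mu s) l - Q s * dot (xi s) l) = 0.
Proof.
  intros Hs. rewrite <- (is_derive_unique _ _ _ (is_derive_Wo_bar_dot l s Hs)).
  apply is_derive_unique, (is_derive_ext_loc (fun _ => cos eps)); [|apply is_derive_Rconst].
  apply (interval_locally a b s); [exact Hs|]. intros t Ht. symmetry. exact (helix_cos t Ht).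
Qed.

Lemma helix_normal_zero (s : R) : a < s < b -> P s * dot (mu s) l - Q s * dot (xi s) l = 0.
Proof.
  intros Hs. set (h := fun t => P t * dot (mu t) l - Q t * dot (xi t) l).
  change (h s = 0). destruct (Req_dec (h s) 0) as [|Hne]; [assumption|exfalso].
  assert (Hh : ex_derive h s).
  { apply (ex_derive_minus (fun t => P t * dot (mu t) l) (fun t => Q t * dot (xi t) l));
      apply ex_derive_mult; [apply ex_derive_Wo_bar_xi, Hs | | apply ex_derive_Wo_bar_mu, Hs |];
      eexists; [apply is_derive_mu_dot, Hs | apply is_derive_xi_dot, Hs]. }
  assert (Hloc : locally s (fun t => a < t < b /\ h t <> 0)).
  { apply filter_and; [exact (interval_locally a b s _ Hs (fun t Ht => Ht))|].
    exact (ex_derive_continuous h s Hh _ (open_neq 0 (h s) Hne)). }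
  destruct (locally_closed_interval _ s Hloc) as [a' [b' [Hab' Hin]]].
  destruct (nondegenerate a' b') as [s1 [s2 [Hs1 [Hs2 Hne12]]]].
  - destruct (Hin a') as [Ha' _]; lra.
  - lra.
  - destruct (Hin b') as [Hb' _]; lra.
  - apply Hne12, Wo_bar_const_between. intros y Hy.
    assert (Hy' : a' <= y <= b') by (unfold Rmin, Rmax in Hy; destruct (Rle_dec s1 s2); lra).
    destruct (Hin y Hy') as [Hyab Hhy]. split; [exact Hyab|].
    destruct (Rmult_integral _ _ (helix_rate_normal y Hyab)); [assumption|contradiction].
Qed.

Lemma helix_xi_dot (s : R) : a < s < b -> dot (xi s) l = cos eps * P s.
Proof.
  intros Hs. rewrite <- (helix_cos s Hs).
  transitivity (dot (xi s) l * (P s ^ 2 + Q s ^ 2)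
                + Q s * (P s * dot (mu s) l - Q s * dot (xi s) l)); [|ring].
  rewrite (Wo_bar_unit s Hs), (helix_normal_zero s Hs). ring.
Qed.

Lemma helix_mu_dot (s : R) : a < s < b -> dot (mu s) l = cos eps * Q s.
Proof.
  intros Hs. rewrite <- (helix_cos s Hs).
  transitivity (dot (mu s) l * (P s ^ 2 + Q s ^ 2)
                - P s * (P s * dot (mu s) l - Q s * dot (xi s) l)); [|ring].
  rewrite (Wo_bar_unit s Hs), (helix_normal_zero s Hs). ring.
Qed.

Lemma helix_v_dot_const (s s' : R) : a < s < b -> a < s' < b -> dot (v s) l = dot (v s') l.
Proof.
  intros Hs Hs'. apply (derive_zero_eq (fun t => dot (v t) l)). intros y Hy.
  assert (Hy' : a < y < b) by (unfold Rmin, Rmax in Hy; destruct (Rle_dec s s'); lra).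
  replace 0 with (- K y * dot (xi y) l + - T y * dot (mu y) l).
  - apply is_derive_v_dot, Hy'.
  - rewrite (helix_xi_dot y Hy'), (helix_mu_dot y Hy').
    transitivity (- cos eps * (P y * K y + Q y * T y)); [ring|].
    rewrite Wo_bar_orth_KT. ring.
Qed.

Lemma helix_v_dot_sq (s : R) : a < s < b -> dot (v s) l ^ 2 = sin eps ^ 2.
Proof.
  intros Hs. destruct helix as [Hl _]. apply vnorm_eq1 in Hl.
  rewrite (frame_expansion l s Hs) in Hl at 1.
  rewrite !dot_vadd_l, !dot_vscal_l, (helix_xi_dot s Hs), (helix_mu_dot s Hs) in Hl.
  pose proof (Wo_bar_unit s Hs) as HPQ. pose proof (sin2_cos2 eps) as Hsc. unfold Rsqr in Hsc.
  transitivity (1 - cos eps ^ 2 * (P s ^ 2 + Q s ^ 2)); [lra|].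
  rewrite HPQ. lra.
Qed.

End MyllerConfiguration.

Theorem corollary29 (a b : R) (r xi mu v : R -> vec) (G K T : R -> R)
  (l : vec) (eps : R) :
  myller_config a b r xi mu v G K T ->
  (forall s, a < s < b -> (K s, T s) <> (0, 0)) ->
  Wo_bar_nowhere_locally_constant a b xi mu K T ->
  Wo_helix a b xi mu K T l eps ->
  exists sg : R, (sg = 1 \/ sg = -1) /\
    forall s, a < s < b ->
      l = vadd (vadd
            (vscal (cos eps * (T s / sqrt (T s ^ 2 + K s ^ 2))) (xi s))
            (vscal (- (cos eps * (K s / sqrt (T s ^ 2 + K s ^ 2)))) (mu s)))
            (vscal (- sg * sin eps) (v s)).
Proof.
  intros Hc HKT Hnc Hh.
  pose proof (helix_xi_dot a b r xi mu v G K T Hc HKT l eps Hh Hnc) as HA.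
  pose proof (helix_mu_dot a b r xi mu v G K T Hc HKT l eps Hh Hnc) as HB.
  pose proof (helix_v_dot_const a b r xi mu v G K T Hc HKT l eps Hh Hnc) as HC.
  set (m := (a + b) / 2).
  assert (Hm : a < m < b) by (destruct Hc as [Hab _]; unfold m; lra).
  destruct (sq_eq_sign _ _ (helix_v_dot_sq a b r xi mu v G K T Hc HKT l eps Hh Hnc m Hm))
    as [sg [Hsg HCm]].
  exists sg. split; [exact Hsg|]. intros s Hs.
  rewrite (frame_expansion a b r xi mu v G K T Hc l s Hs) at 1.
  rewrite (HA s Hs), (HB s Hs), (HC s m Hs Hm), HCm.
  unfold Wo_bar_xi, Wo_bar_mu. rewrite Ropp_mult_distr_r. reflexivity.
Qed.
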